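(* Let $t\le 1$ and let $M\in\mathbb{R}^{n\times n}$ be a distance matrix (i.e. $M_{ij}\ge 0$, $M_{ii}=0$, $M_{ij}=M_{ji}$, $M_{ik}\le M_{ij}+M_{jk}$ for all $i,j,k$). Let $\bar M=\sum_{i,j}M_{ij}$. Then for all $\tilde x,\tilde y,\tilde z\in\tilde\Delta_n$, $$\big(\tilde d^t_M(\tilde x,\tilde z)\big)^{2-t}\le \bar M^{\,1-t}\Big(\tilde d^t_M(\tilde x,\tilde y)+\tilde d^t_M(\tilde y,\tilde z)\Big).$$
   Context: $t^*=1/(2-t)$. All powers of vectors and matrices are entrywise. The co-simplex is $\tilde\Delta_n=\{\tilde p\in\mathbb{R}^n:\tilde p\ge 0,\ \sum_i \tilde p_i^{1/t^*}=1\}$. For $\tilde r,\tilde c\in\tilde\Delta_n$, the co-polytope is $\tilde U_n(\tilde r,\tilde c)=\{\tilde P\in\mathbb{R}_{\ge0}^{n\times n}: \sum_j\tilde P_{ij}^{1/t^*}=\tilde r_i^{1/t^*}\ \forall i,\ \sum_i\tilde P_{ij}^{1/t^*}=\tilde c_j^{1/t^*}\ \forall j\}$. $\langle A,B\rangle=\sum_{ij}A_{ij}B_{ij}$. The (unregularized) measured cost is $\tilde d^t_M(\tilde r,\tilde c)=\min_{\tilde P\in\tilde U_n(\tilde r,\tilde c)}\langle\tilde P,M\rangle$. *)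

From HB Require Import structures.
From mathcomp Require Import all_boot all_order all_algebra.
From mathcomp Require Import all_classical all_reals.
From mathcomp Require Import exp.
Set Implicit Arguments. Unset Strict Implicit. Unset Printing Implicit Defensive.
Import Order.TTheory GRing.Theory Num.Theory.
Local Open Scope ring_scope.
Local Open Scope classical_set_scope.

Section Defs.
Variable R : realType.

Definition tstar (t : R) : R := 1 / (2 - t).

Definition co_simplex (t : R) {n : nat} : set ('I_n -> R) :=
  [set p | (forall i, 0 <= p i) /\ \sum_(i < n) p i `^ (1 / tstar t) = 1].

Definition co_polytope (t : R) (n : nat) (r c : 'I_n -> R) : set 'M[R]_n :=
  [set P | (forall i j, 0 <= P i j) /\
           (forall i, \sum_(j < n) P i j `^ (1 / tstar t) = r i `^ (1 / tstar t)) /\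
           (forall j, \sum_(i < n) P i j `^ (1 / tstar t) = c j `^ (1 / tstar t))].

Definition frob (n : nat) (A B : 'M[R]_n) : R := \sum_(i < n) \sum_(j < n) A i j * B i j.

(* unregularized measured cost: min over the co-polytope (taken as inf) *)
Definition measured_cost (t : R) (n : nat) (M : 'M[R]_n) (r c : 'I_n -> R) : R :=
  inf [set frob P M | P in co_polytope t r c].

Definition is_distance_matrix (n : nat) (M : 'M[R]_n) : Prop :=
  (forall i j, 0 <= M i j) /\ (forall i, M i i = 0) /\ (forall i j, M i j = M j i) /\
  (forall i j k, M i k <= M i j + M j k).

Definition Mbar (n : nat) (M : 'M[R]_n) : R := \sum_(i < n) \sum_(j < n) M i j.
End Defs.

(** The power plans [Q = P^(2-t)] of elements of a co-polytope are ordinary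
    couplings of the marginals [x^(2-t)], [y^(2-t)], so two of them can be glued
    along their common marginal as in the classical proof of the triangle
    inequality for optimal transport; the triangle inequality of [M] bounds the
    cost of the glued coupling by the sum of the two costs.  Going back from the
    glued coupling [G] to the co-polytope costs the power mean inequality
    [(sum M_ij G_ij^(1/p))^p <= Mbar^(p-1) sum M_ij G_ij] with [p = 2 - t >= 1],
    and since every entry of a plan between co-simplex points is at most [1],
    [Q <= P] entrywise. *)
From HB Require Import structures.
From mathcomp Require Import all_boot all_order all_algebra.
From mathcomp Require Import all_classical all_reals.
From mathcomp Require Import exp hoelder.
From mathcomp Require Import ring lra.
Set Implicit Arguments. Unset Strict Implicit. Unset Printing Implicit Defensive.
Import Order.TTheory GRing.Theory Num.Theory.
Local Open Scope ring_scope.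
Local Open Scope classical_set_scope.

Section PowerSums.
Variable R : realType.

Lemma ler_sum_term (I : finType) (F : I -> R) i :
  (forall j, 0 <= F j) -> F i <= \sum_j F j.
Proof. by move=> F0; rewrite (bigD1 i) //= lerDl sumr_ge0. Qed.

Lemma powR_le_self (a p : R) : 0 <= a -> 1 <= p -> a `^ p <= 1 -> a `^ p <= a.
Proof.
move=> a0 p1 ap1; have [->|a_neq0] := eqVneq a 0.
  by rewrite powR0 // gt_eqF // (lt_le_trans ltr01 p1).
have a_gt0 : 0 < a by rewrite lt_neqAle eq_sym a_neq0.
have [a1|a1] := leP a 1; first by rewrite ge1r_powR // a_gt0 a1.
by have := le_trans (le1r_powR (ltW a1) p1) ap1; rewrite leNgt a1.
Qed.

Lemma hoelder_sum (T : Type) (s : seq T) (x y : T -> R) (p q : R) :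
  (forall i, 0 <= x i) -> (forall i, 0 <= y i) -> 0 < p -> 0 < q -> p^-1 + q^-1 = 1 ->
  \sum_(i <- s) x i * y i <=
    (\sum_(i <- s) x i `^ p) `^ p^-1 * (\sum_(i <- s) y i `^ q) `^ q^-1.
Proof.
move=> x0 y0 p0 q0 pq; elim: s => [|a s IH].
  by rewrite !big_nil mulr_ge0 // powR_ge0.
rewrite !big_cons; apply: (le_trans (lerD (lexx _) IH)).
have := hoelder2 (x0 a) (powR_ge0 (\sum_(i <- s) x i `^ p) p^-1)
  (y0 a) (powR_ge0 (\sum_(i <- s) y i `^ q) q^-1) p0 q0 pq.
by rewrite -!powRrM !mulVf ?gt_eqF // !powRr1 // sumr_ge0 // => i _; rewrite powR_ge0.
Qed.

(* Hoelder with exponents [p] and [p / (p - 1)] applied to [w^(1/p) a] and [w^(1 - 1/p)]. *)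
Lemma wsum_powR_le (T : Type) (s : seq T) (w a : T -> R) (p : R) :
  1 <= p -> (forall i, 0 <= w i) -> (forall i, 0 <= a i) ->
  (\sum_(i <- s) w i * a i) `^ p <=
    (\sum_(i <- s) w i) `^ (p - 1) * \sum_(i <- s) w i * a i `^ p.
Proof.
move=> p1 w0 a0; have p0 : 0 < p := lt_le_trans ltr01 p1.
have [->|p_neq1] := eqVneq p 1.
  rewrite subrr powRr0 mul1r powRr1 ?sumr_ge0 // => [|i _]; last exact: mulr_ge0.
  by under [X in _ <= X]eq_bigr do rewrite powRr1 //.
have p1' : 1 < p by rewrite lt_neqAle eq_sym p_neq1 p1.
pose q := p / (p - 1).
have q0 : 0 < q by rewrite divr_gt0 // subr_gt0.
have pq : q^-1 + p^-1 = 1 by rewrite invf_div; field; rewrite gt_eqF // subr_gt0.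
have := hoelder_sum s (fun i => powR_ge0 (w i) q^-1)
  (fun i => mulr_ge0 (powR_ge0 (w i) p^-1) (a0 i)) q0 p0 pq.
have splitw i : w i `^ q^-1 * (w i `^ p^-1 * a i) = w i * a i.
  by rewrite mulrA -powRD ?pq ?oner_eq0 // powRr1.
have wK i : (w i `^ q^-1) `^ q = w i by rewrite -powRrM mulVf ?gt_eqF // powRr1.
have waK i : (w i `^ p^-1 * a i) `^ p = w i * a i `^ p.
  by rewrite powRM ?powR_ge0 // -powRrM mulVf ?gt_eqF // powRr1.
rewrite (eq_bigr _ (fun i _ => splitw i)) (eq_bigr _ (fun i _ => wK i)).
rewrite (eq_bigr _ (fun i _ => waK i)).
move=> hol; apply: (le_trans (ge0_ler_powR (ltW p0) _ _ hol)); rewrite ?nnegrE.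
- by rewrite sumr_ge0 // => i _; rewrite mulr_ge0.
- by rewrite mulr_ge0 ?powR_ge0.
rewrite powRM ?powR_ge0 // -!powRrM mulVf ?gt_eqF // powRr1; last first.
  by rewrite sumr_ge0 // => i _; rewrite mulr_ge0 ?powR_ge0.
by rewrite invf_div divfK // gt_eqF.
Qed.

Lemma le_inf_add (E F : set R) (c : R) : E !=set0 -> F !=set0 ->
  (forall a b, E a -> F b -> c <= a + b) -> c <= inf E + inf F.
Proof.
move=> E0 F0 cEF; rewrite -lerBlDl; apply: lb_le_inf => // b Fb.
rewrite lerBlDl -lerBlDr; apply: lb_le_inf => // a Ea.
by rewrite lerBlDr; apply: cEF.
Qed.

Lemma le_mul_inf_add (E F : set R) (K c : R) : 0 <= K -> E !=set0 -> F !=set0 ->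
  (forall a b, E a -> F b -> c <= K * (a + b)) -> c <= K * (inf E + inf F).
Proof.
move=> K0 E0 F0 cEF; have [K_eq0|K_gt0] := eqVneq K 0.
  by case: E0 F0 => a Ea [b Fb]; move: (cEF a b Ea Fb); rewrite K_eq0 !mul0r.
have {K0}K_gt0 : 0 < K by rewrite lt_neqAle eq_sym K_gt0.
rewrite -ler_pdivrMl //; apply: le_inf_add => // a b Ea Fb.
by rewrite ler_pdivrMl // cEF.
Qed.

End PowerSums.

Section Gluing.
Variables (R : realType) (n : nat) (Q1 Q2 : 'M[R]_n) (b : 'I_n -> R).
Hypotheses (Q1_ge0 : forall i j, 0 <= Q1 i j) (Q2_ge0 : forall i j, 0 <= Q2 i j).
Hypotheses (Q1_col : forall j, \sum_i Q1 i j = b j)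
           (Q2_row : forall j, \sum_k Q2 j k = b j).

(* When [b j = 0] the division yields [0], which is harmless: then the [j]-th
   column of [Q1] and the [j]-th row of [Q2] vanish. *)
Definition glue : 'M[R]_n := \matrix_(i, k) \sum_j Q1 i j * Q2 j k / b j.

Lemma glue_ge0 i k : 0 <= glue i k.
Proof.
by rewrite mxE sumr_ge0 // => j _; rewrite divr_ge0 ?mulr_ge0 // -Q1_col sumr_ge0.
Qed.

Lemma mul_Q1_divff i j : Q1 i j * (b j / b j) = Q1 i j.
Proof.
have [bj0|bj_neq0] := eqVneq (b j) 0; last by rewrite divff // mulr1.
by rewrite (@psumr_eq0P _ _ xpredT (Q1^~ j)) ?mul0r ?Q1_col.
Qed.

Lemma mul_Q2_divff j k : b j / b j * Q2 j k = Q2 j k.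
Proof.
have [bj0|bj_neq0] := eqVneq (b j) 0; last by rewrite divff // mul1r.
by rewrite (@psumr_eq0P _ _ xpredT (Q2 j)) ?mulr0 ?Q2_row.
Qed.

Lemma sumr_glue_l i j : \sum_k Q1 i j * Q2 j k / b j = Q1 i j.
Proof. by rewrite -mulr_suml -mulr_sumr Q2_row -mulrA mul_Q1_divff. Qed.

Lemma sumr_glue_r j k : \sum_i Q1 i j * Q2 j k / b j = Q2 j k.
Proof.
by under eq_bigr do rewrite mulrAC; rewrite -!mulr_suml Q1_col mul_Q2_divff.
Qed.

Lemma glue_row i : \sum_k glue i k = \sum_j Q1 i j.
Proof.
under eq_bigr do rewrite mxE; rewrite exchange_big /=.
by apply: eq_bigr => j _; rewrite sumr_glue_l.
Qed.

Lemma glue_col k : \sum_i glue i k = \sum_j Q2 j k.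
Proof.
under eq_bigr do rewrite mxE; rewrite exchange_big /=.
by apply: eq_bigr => j _; rewrite sumr_glue_r.
Qed.

Lemma frob_glue_le (M : 'M[R]_n) :
  (forall i j k, M i k <= M i j + M j k) -> frob glue M <= frob Q1 M + frob Q2 M.
Proof.
move=> M_tri; pose T i j k := Q1 i j * Q2 j k / b j.
have T_ge0 i j k : 0 <= T i j k.
  by rewrite divr_ge0 ?mulr_ge0 // -Q1_col sumr_ge0.
apply: (@le_trans _ _ (\sum_i \sum_k \sum_j T i j k * (M i j + M j k))).
  apply: ler_sum => i _; apply: ler_sum => k _; rewrite mxE mulr_suml.
  by apply: ler_sum => j _; rewrite -/(T i j k) ler_wpM2l.
have -> : \sum_i \sum_k \sum_j T i j k * (M i j + M j k) =
    \sum_i \sum_k \sum_j T i j k * M i j + \sum_i \sum_k \sum_j T i j k * M j k.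
  rewrite -big_split; apply: eq_bigr => i _; rewrite -big_split.
  by apply: eq_bigr => k _; rewrite -big_split; apply: eq_bigr => j _; rewrite mulrDr.
apply: lerD.
- under eq_bigr do rewrite exchange_big /=.
  by apply: ler_sum => i _; apply: ler_sum => j _; rewrite -mulr_suml sumr_glue_l.
- rewrite exchange_big /=; under eq_bigr do rewrite exchange_big /=.
  rewrite exchange_big /=.
  by apply: ler_sum => j _; apply: ler_sum => k _; rewrite -mulr_suml sumr_glue_r.
Qed.

End Gluing.

Definition is_coupling (R : realType) (n : nat) (a b : 'I_n -> R) (Q : 'M[R]_n) :=
  [/\ forall i j, 0 <= Q i j, forall i, \sum_j Q i j = a i & forall j, \sum_i Q i j = b j].

Lemma glue_coupling (R : realType) (n : nat) (a b c : 'I_n -> R) (Q1 Q2 : 'M[R]_n) :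
  is_coupling a b Q1 -> is_coupling b c Q2 -> is_coupling a c (glue Q1 Q2 b).
Proof.
move=> [Q1_ge0 Q1_row Q1_col] [Q2_ge0 Q2_row Q2_col]; split.
- exact: glue_ge0.
- by move=> i; rewrite glue_row.
- by move=> k; rewrite glue_col.
Qed.

Section CoPolytope.
Variables (R : realType) (n : nat).
Implicit Types (t : R) (M P : 'M[R]_n) (r c : 'I_n -> R).

Lemma tstar_inv t : 1 / tstar t = 2 - t.
Proof. by rewrite /tstar !div1r invrK. Qed.

Definition powR_mx (p : R) (A : 'M[R]_n) : 'M[R]_n := \matrix_(i, j) A i j `^ p.

Lemma powR_mxK (p : R) (A : 'M[R]_n) : 0 < p -> (forall i j, 0 <= A i j) ->
  powR_mx p (powR_mx p^-1 A) = A.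
Proof.
move=> p0 A0; apply/matrixP => i j.
by rewrite !mxE -powRrM mulVf ?gt_eqF // powRr1.
Qed.

Lemma frob_ge0 M P : (forall i j, 0 <= M i j) -> (forall i j, 0 <= P i j) ->
  0 <= frob P M.
Proof.
by move=> M0 P0; rewrite sumr_ge0 // => i _; rewrite sumr_ge0 // => j _; rewrite mulr_ge0.
Qed.

Lemma ler_frob M P P' : (forall i j, 0 <= M i j) -> (forall i j, P i j <= P' i j) ->
  frob P M <= frob P' M.
Proof. by move=> M0 PP'; do 2!apply: ler_sum => ? _; rewrite ler_wpM2r. Qed.

Lemma frob_powR_le (p : R) M P : 1 <= p ->
  (forall i j, 0 <= M i j) -> (forall i j, 0 <= P i j) ->
  frob P M `^ p <= Mbar M `^ (p - 1) * frob (powR_mx p P) M.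
Proof.
move=> p1 M0 P0; rewrite /frob /Mbar.
under eq_bigr do under eq_bigr do rewrite mulrC.
under [X in _ * X]eq_bigr do under eq_bigr do rewrite mxE mulrC.
rewrite !pair_big /=.
exact: wsum_powR_le p1 (fun u => M0 u.1 u.2) (fun u => P0 u.1 u.2).
Qed.

Lemma co_polytope_powR_mx t r c P : co_polytope t r c P ->
  is_coupling (fun i => r i `^ (2 - t)) (fun j => c j `^ (2 - t)) (powR_mx (2 - t) P).
Proof.
rewrite /co_polytope tstar_inv => -[_ [Prow Pcol]]; split.
- by move=> i j; rewrite mxE powR_ge0.
- by move=> i; rewrite -Prow; apply: eq_bigr => j _; rewrite mxE.
- by move=> j; rewrite -Pcol; apply: eq_bigr => i _; rewrite mxE.
Qed.

Lemma powR_mx_co_polytope t r c G : t < 2 ->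
  is_coupling (fun i => r i `^ (2 - t)) (fun j => c j `^ (2 - t)) G ->
  co_polytope t r c (powR_mx (2 - t)^-1 G).
Proof.
move=> t2 [G_ge0 Grow Gcol]; have GK : powR_mx (2 - t) (powR_mx (2 - t)^-1 G) = G.
  by apply: powR_mxK => //; rewrite subr_gt0.
rewrite /co_polytope tstar_inv; split; first by move=> i j; rewrite mxE powR_ge0.
split=> [i|j]; [rewrite -Grow | rewrite -Gcol]; apply: eq_bigr => k _;
  by rewrite -[in RHS]GK [in RHS]mxE.
Qed.

Lemma co_polytope_outer t r c : co_simplex t r -> co_simplex t c ->
  co_polytope t r c (\matrix_(i, j) (r i * c j)).
Proof.
rewrite /co_simplex /co_polytope tstar_inv => -[r0 r1] [c0 c1]; split.
  by move=> i j; rewrite mxE mulr_ge0.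
split=> [i|j]; under eq_bigr do rewrite mxE powRM //.
  by rewrite -big_distrr /= c1 mulr1.
by rewrite -big_distrl /= r1 mul1r.
Qed.

Lemma co_polytope_entry_le t r c P : t <= 1 -> co_simplex t r ->
  co_polytope t r c P -> forall i j, P i j `^ (2 - t) <= P i j.
Proof.
rewrite /co_simplex /co_polytope tstar_inv => t1 [_ r1] [P0 [Prow _]] i j.
apply: powR_le_self => //; first lra.
apply: (le_trans (ler_sum_term j (fun j => powR_ge0 (P i j) _))).
by rewrite Prow -[leRHS]r1 (ler_sum_term i (fun i => powR_ge0 (r i) _)).
Qed.

Lemma costs_nonempty t M r c : co_simplex t r -> co_simplex t c ->
  [set frob P M | P in co_polytope t r c] !=set0.
Proof.
move=> hr hc; exists (frob (\matrix_(i, j) (r i * c j)) M).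
by exists (\matrix_(i, j) (r i * c j)); first exact: co_polytope_outer.
Qed.

Lemma measured_cost_ge0 t M r c : (forall i j, 0 <= M i j) ->
  co_simplex t r -> co_simplex t c -> 0 <= measured_cost t M r c.
Proof.
move=> M0 hr hc; apply: lb_le_inf; first exact: costs_nonempty.
by move=> _ [P [P0 _] <-]; exact: frob_ge0.
Qed.

Lemma measured_cost_le t M r c P : (forall i j, 0 <= M i j) ->
  co_polytope t r c P -> measured_cost t M r c <= frob P M.
Proof.
move=> M0 hP; apply: ge_inf; last by exists P.
by exists 0 => _ [P' [P0 _] <-]; exact: frob_ge0.
Qed.

Lemma co_polytope_glue t M x y z P1 P2 :
  t <= 1 -> is_distance_matrix M -> co_simplex t x -> co_simplex t y ->
  co_polytope t x y P1 -> co_polytope t y z P2 ->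
  exists2 P, co_polytope t x z P &
    frob P M `^ (2 - t) <= Mbar M `^ (1 - t) * (frob P1 M + frob P2 M).
Proof.
move=> t1 [M0 [_ [_ M_tri]]] hx hy hP1 hP2.
have p1 : 1 <= 2 - t by lra.
have Q1_le i j : powR_mx (2 - t) P1 i j <= P1 i j.
  by rewrite mxE (co_polytope_entry_le t1 hx hP1).
have Q2_le i j : powR_mx (2 - t) P2 i j <= P2 i j.
  by rewrite mxE (co_polytope_entry_le t1 hy hP2).
have Q1_cpl := co_polytope_powR_mx hP1; have Q2_cpl := co_polytope_powR_mx hP2.
have G_cpl := glue_coupling Q1_cpl Q2_cpl.
(* Generalizing the power plans keeps their [\matrix_] bodies out of unification. *)
move: (powR_mx _ P1) (powR_mx _ P2) Q1_le Q2_le Q1_cpl Q2_cpl G_cpl.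
move=> Q1 Q2 Q1_le Q2_le [Q1_ge0 _ Q1_col] [Q2_ge0 Q2_row _] G_cpl.
have [G_ge0 _ _] := G_cpl.
exists (powR_mx (2 - t)^-1 (glue Q1 Q2 (fun j => y j `^ (2 - t)))).
  by apply: powR_mx_co_polytope => //; lra.
have -> : 1 - t = (2 - t) - 1 by ring.
apply: (le_trans (frob_powR_le p1 M0 _)); first by move=> i k; rewrite mxE powR_ge0.
rewrite powR_mxK ?ler_wpM2l ?powR_ge0 //; last lra.
apply: (le_trans (frob_glue_le Q1_ge0 Q2_ge0 Q1_col Q2_row M_tri)).
by apply: lerD; apply: ler_frob.
Qed.

End CoPolytope.

Theorem proposition1 (R : realType) (n : nat) (t : R) (M : 'M[R]_n) :
  t <= 1 -> is_distance_matrix M ->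
  forall x y z : 'I_n -> R,
    co_simplex t x -> co_simplex t y -> co_simplex t z ->
    measured_cost t M x z `^ (2 - t) <=
      Mbar M `^ (1 - t) * (measured_cost t M x y + measured_cost t M y z).
Proof.
move=> t1 hM x y z hx hy hz; have M_ge0 : forall i j, 0 <= M i j by case: hM.
apply: le_mul_inf_add; [exact: powR_ge0 | exact: costs_nonempty | exact: costs_nonempty |].
move=> _ _ [P1 hP1 <-] [P2 hP2 <-].
have [P hP cost_le] := co_polytope_glue t1 hM hx hy hP1 hP2.
apply: le_trans cost_le; apply: ge0_ler_powR; rewrite ?nnegrE; first lra.
- exact: measured_cost_ge0.
- by apply: frob_ge0 => //; case: hP.
- exact: measured_cost_le.
Qed.
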